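(* Let $L$ be a finite-dimensional Lie algebra over a perfect field $K$ of characteristic $\neq 2$ such that $\mathrm{HomLie}(L)$ is closed with respect to the anticommutator $\varphi * \psi = \frac12(\varphi\circ\psi+\psi\circ\varphi)$. Then one of the following holds: (i) $\mathrm{HomLie}(L)$, as a Jordan algebra with respect to $*$, is such that every element of it is either invertible or nilpotent; (ii) $L$ decomposes as a direct sum of vector spaces $L = A \oplus B$ with $A, B \neq 0$, $[[A,A],B] = 0$ and $[[B,B],A] = 0$ (equivalently, $L$ has an idempotent Hom-Lie structure different from $0$ and from the identity map). Moreover, if $K$ is algebraically closed, then condition (i) can be replaced by the condition: (i)$'$ the Jordan algebra $\mathrm{HomLie}(L)$ is isomorphic to the semidirect sum of $K$ and a nilpotent algebra.
   Context: A Hom-Lie structure on a Lie algebra $L$ is a linear map $\varphi: L \to L$ satisfying $[[x,y],\varphi(z)] + [[z,x],\varphi(y)] + [[y,z],\varphi(x)] = 0$ for all $x,y,z \in L$. $\mathrm{HomLie}(L)$ is the vector space of all Hom-Lie structures on $L$; when closed under the anticommutator it is a (special) Jordan algebra with product $\varphi*\psi$. *)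

From HB Require Import structures.
From mathcomp Require Import all_boot all_order all_algebra.
Set Implicit Arguments. Unset Strict Implicit. Unset Printing Implicit Defensive.
Import GRing.Theory.
Local Open Scope ring_scope.


Definition is_lie_bracket (K : fieldType) (V : vectType K) (br : V -> V -> V) : Prop :=
  [/\ (forall (a : K) (x y z : V), br (a *: x + y) z = a *: br x z + br y z),
      (forall (a : K) (x y z : V), br z (a *: x + y) = a *: br z x + br z y),
      (forall x : V, br x x = 0) &
      (forall x y z : V, br x (br y z) + br y (br z x) + br z (br x y) = 0)].

Definition homlie (K : fieldType) (V : vectType K) (br : V -> V -> V)
    (phi : 'End(V)) : Prop :=
  forall x y z : V,
    br (br x y) (phi z) + br (br z x) (phi y) + br (br y z) (phi x) = 0.

Definition jprod (K : fieldType) (V : vectType K) (phi psi : 'End(V)) : 'End(V) :=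
  (2%:R : K)^-1 *: ((phi \o psi)%VF + (psi \o phi)%VF).

Fixpoint jpow (K : fieldType) (V : vectType K) (phi : 'End(V)) (n : nat) : 'End(V) :=
  if n is m.+1 then jprod phi (jpow phi m) else \1%VF.

Definition jinvertible (K : fieldType) (V : vectType K) (J : 'End(V) -> Prop)
    (phi : 'End(V)) : Prop :=
  exists2 psi, J psi & jprod phi psi = \1%VF /\ jprod (jprod phi phi) psi = phi.

Definition jnilpotent (K : fieldType) (V : vectType K) (phi : 'End(V)) : Prop :=
  exists n : nat, (0 < n)%N /\ jpow phi n = 0.

Inductive jmonomial (K : fieldType) (V : vectType K) (N : {vspace 'End(V)})
    : nat -> 'End(V) -> Prop :=
  | jmon1 x : x \in N -> jmonomial N 1 x
  | jmonM i j x y : jmonomial N i x -> jmonomial N j y ->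
      jmonomial N (i + j) (jprod x y).

(* N is a nilpotent (Jordan) algebra: N^m = 0 for all large m, where
   N^m is spanned by the monomials of degree m. *)
Definition jnilpotent_algebra (K : fieldType) (V : vectType K)
    (N : {vspace 'End(V)}) : Prop :=
  (forall x y, x \in N -> y \in N -> jprod x y \in N) /\
  exists n : nat, forall m x, (n <= m)%N -> jmonomial N m x -> x = 0.

(* Perfect field: char 0 or Frobenius surjective. *)
Definition perfect_field (K : fieldType) : Prop :=
  forall p : nat, p \in [pchar K] -> forall x : K, exists y : K, y ^+ p = x.

(* Let J = HomLie(L): a subspace of End(L) containing id and closed under the
   Jordan product, hence under composition of commuting elements.  Fitting's
   lemma, applied to left composition by f on the centralizer of f in J, shows
   that every f in J is invertible in J, nilpotent, or produces an idempotent
   e in J other than 0 and id; and an idempotent Hom-Lie structure e splits L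
   as im e + ker e with [[A,A],B] = [[B,B],A] = 0.
   Over an algebraically closed field and without such idempotents, f - c id is
   nilpotent for an eigenvalue c of f, and the nilpotent elements of J form a
   Jordan subalgebra N: if x + y were not nilpotent, conjugation by an inverse
   square root v of x + y (a polynomial in x + y) would write id as the sum of
   the two nilpotents v x v and v y v.  Finally a Jordan algebra of nilpotent
   endomorphisms is nilpotent: some filtration of L is lowered by all its
   elements, which is proved by a maximality argument with Jordan
   normalizers. *)

From HB Require Import structures.
From mathcomp Require Import all_boot all_order all_algebra.
From mathcomp Require Import ring zify.
From Stdlib Require Import Classical.
Set Implicit Arguments. Unset Strict Implicit. Unset Printing Implicit Defensive.
Import GRing.Theory.
Local Open Scope ring_scope.

Lemma ex_maxn_prop (P : nat -> Prop) (b : nat) :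
  (exists n, P n) -> (forall n, P n -> (n <= b)%N) ->
  exists2 n, P n & forall m, P m -> (m <= n)%N.
Proof.
move=> [n0 Pn0] Pb.
suff: forall d n, (b - n <= d)%N -> P n -> exists2 n, P n & forall m, P m -> (m <= n)%N.
  by apply; [apply: leqnn | exact: Pn0].
elim=> [|d IHd] n bn Pn.
  by exists n => // m Pm; have := Pb m Pm; have := Pb n Pn; lia.
case: (classic (exists2 m, P m & (n < m)%N)) => [[m Pm nm] | nm].
  by apply: (IHd m) => //; have := Pb m Pm; lia.
by exists n => // m Pm; apply: NNPP => mn; apply: nm; exists m => //; lia.
Qed.

Section SubspacesOfPredicates.
Variables (K : fieldType) (T : vectType K).

Lemma dimv_add_line_gt (U : {vspace T}) x :
  x \notin U -> (\dim U < \dim (U + <[x]>))%N.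
Proof.
by move=> xU; rewrite (ltn_leqif (dimv_leqif_sup (addvSl U _))) subv_add subvv -memvE.
Qed.

Lemma vspace_of_pred (P : T -> Prop) :
  P 0 -> (forall a x y, P x -> P y -> P (a *: x + y)) ->
  exists U : {vspace T}, forall x, x \in U <-> P x.
Proof.
move=> P0 Plin.
pose sub_dim n := exists U : {vspace T}, (forall x, x \in U -> P x) /\ \dim U = n.
have [n [U [UP <-]] Umax] : exists2 n, sub_dim n & forall m, sub_dim m -> (m <= n)%N.
  apply: (@ex_maxn_prop _ (\dim {:T})).
    by exists 0%N, 0%VS; split; [move=> x; rewrite memv0 => /eqP -> | rewrite dimv0].
  by move=> m [U [_ <-]]; apply/dimvS/subvf.
exists U => x; split; first exact: UP.
move=> Px; apply: NNPP => /negP /dimv_add_line_gt; rewrite ltnNge Umax //.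
exists (U + <[x]>)%VS; split=> // z /memv_addP [u uU [w /vlineP [a ->] ->]].
by rewrite addrC; apply: Plin => //; apply: UP.
Qed.

Lemma vspace_chain_stalls (Y : nat -> {vspace T}) :
  (forall k, (Y k.+1 <= Y k)%VS) -> exists k, Y k.+1 = Y k.
Proof.
move=> Ydecr; apply: NNPP => Ystrict.
have dimY k : (\dim (Y k) + k <= \dim (Y 0))%N.
  elim: k => [|k IHk]; first by rewrite addn0.
  have neqY : Y k.+1 != Y k by apply/eqP => eqY; apply: Ystrict; exists k.
  have : (\dim (Y k.+1) < \dim (Y k))%N by rewrite (ltn_leqif (dimv_leqif_eq (Ydecr k))).
  lia.
by have := dimY (\dim (Y 0)).+1; rewrite addnS ltnNge leq_addl.
Qed.

End SubspacesOfPredicates.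

Section LfunExp.
Variables (K : fieldType) (V : vectType K).
Implicit Types (f g n : 'End(V)) (c : K).

Definition lfun_exp f k : 'End(V) := iter k (fun g => (f \o g)%VF) \1%VF.

Lemma lfun_exp0 f : lfun_exp f 0 = \1%VF. Proof. by []. Qed.

Lemma lfun_expS f k : lfun_exp f k.+1 = (f \o lfun_exp f k)%VF. Proof. by []. Qed.

Lemma lfun_exp_comm f g : (g \o f = f \o g)%VF ->
  forall k, (g \o lfun_exp f k = lfun_exp f k \o g)%VF.
Proof.
move=> fg; elim=> [|k IHk]; first by rewrite comp_lfun1l comp_lfun1r.
by rewrite lfun_expS comp_lfunA fg -!comp_lfunA IHk.
Qed.

Lemma lfun_expSr f k : lfun_exp f k.+1 = (lfun_exp f k \o f)%VF.
Proof. exact: lfun_exp_comm. Qed.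

Lemma lfun_expD f k l : lfun_exp f (k + l) = (lfun_exp f k \o lfun_exp f l)%VF.
Proof.
elim: k => [|k IHk]; first by rewrite comp_lfun1l.
by rewrite addSn lfun_expS IHk comp_lfunA.
Qed.

Lemma lfun_expZ c f k : lfun_exp (c *: f) k = c ^+ k *: lfun_exp f k.
Proof.
elim: k => [|k IHk]; first by rewrite scale1r.
by rewrite !lfun_expS IHk -comp_lfunZl -comp_lfunZr scalerA exprS.
Qed.

Lemma lfun_exp1 k : lfun_exp \1%VF k = \1%VF.
Proof. by elim: k => // k IHk; rewrite lfun_expS IHk comp_lfun1l. Qed.

Lemma lfun_exp_injective f k : injective f -> injective (lfun_exp f k).
Proof.
move=> finj; elim: k => [|k IHk] u v; first by rewrite !id_lfunE.
by rewrite !lfun_expS !comp_lfunE => /finj /IHk.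
Qed.

Lemma comp_idempotent (p w : 'End(V)) :
  (w \o p = p \o w)%VF -> p = (p \o p \o w)%VF ->
  ((p \o w) \o (p \o w) = p \o w)%VF.
Proof.
by move=> wp pw; rewrite -!comp_lfunA (comp_lfunA w) wp -comp_lfunA !comp_lfunA -pw.
Qed.

Definition lfun_nilpotent f := exists k, lfun_exp f k = 0.

Lemma lfun_nilpotent0 : lfun_nilpotent 0.
Proof. by exists 1%N; rewrite lfun_expS comp_lfun0l. Qed.

Lemma lfun_nilpotentZ c f : lfun_nilpotent f -> lfun_nilpotent (c *: f).
Proof. by move=> [k fk]; exists k; rewrite lfun_expZ fk scaler0. Qed.

Lemma lfun_nilpotentN f : lfun_nilpotent f -> lfun_nilpotent (- f).
Proof. by rewrite -scaleN1r; apply: lfun_nilpotentZ. Qed.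

Lemma lfun_nilpotent_sqr f : lfun_nilpotent f -> lfun_nilpotent (f \o f)%VF.
Proof.
move=> [k fk]; exists k.
suff -> : lfun_exp (f \o f)%VF k = lfun_exp f (k + k) by rewrite lfun_expD fk comp_lfun0r.
elim: k {fk} => [|k IHk] //.
by rewrite lfun_expS IHk addnS addSn !lfun_expS comp_lfunA.
Qed.

Lemma scalar_add_nilpotent_injective c n :
  c != 0 -> lfun_nilpotent n -> injective (c *: \1%VF + n).
Proof.
move=> c0 [k nk]; apply/lker0P; rewrite -subv0; apply/subvP => v.
rewrite memv_ker memv0 add_lfunE scale_lfunE id_lfunE addr_eq0 => /eqP cv.
have nv : n v = (- c) *: v by rewrite scaleNr cv opprK.
have nkv j : lfun_exp n j v = (- c) ^+ j *: v.
  elim: j => [|j IHj]; first by rewrite id_lfunE scale1r.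
  by rewrite lfun_expS comp_lfunE IHj linearZ /= nv scalerA exprSr.
move: (nkv k); rewrite nk zero_lfunE => /esym/eqP.
by rewrite scaler_eq0 expf_eq0 oppr_eq0 (negbTE c0) andbF.
Qed.

Lemma lfun_nilpotent_not_injective f :
  (0 < dim V)%N -> lfun_nilpotent f -> ~ injective f.
Proof.
move=> dimV [k fk] /(lfun_exp_injective (k := k)); rewrite fk => zero_inj.
have : vpick {:V} != 0 by rewrite vpick0 -dimv_eq0 dimvf -lt0n.
by rewrite (zero_inj (vpick {:V}) 0) ?eqxx // !zero_lfunE.
Qed.

Lemma lfun_dim0_eq0 f : dim V = 0%N -> f = 0.
Proof.
move=> dim0; apply/lfunP => v; rewrite zero_lfunE; apply/eqP.
have full0 : (fullv : {vspace V}) = 0%VS by apply/eqP; rewrite -dimv_eq0 dimvf dim0.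
by rewrite -memv0 -full0 memvf.
Qed.

End LfunExp.

Section Eigenvalues.
Variables (K : fieldType) (V : vectType K).
Import VectorInternalTheory.

Lemma lfun_eigenvector (f : 'End(V)) : GRing.closed_field_axiom K -> (0 < dim V)%N ->
  exists c : K, exists2 v : V, v != 0 & f v = c *: v.
Proof.
move=> closedK dimV.
pose p := char_poly (f2mx f).
have size_p : size p = (dim V).+1 by rewrite size_char_poly.
have [x px] := closedK (dim V) (fun i => - p`_i) dimV.
have : eigenvalue (f2mx f) x.
  rewrite eigenvalue_root_char; apply/rootP.
  rewrite horner_coef size_p big_ord_recr /=.
  have /monicP := char_poly_monic (f2mx f); rewrite /lead_coef size_p => ->.
  by rewrite mul1r px -big_split /= big1 // => i _; rewrite mulNr addrN.
case/eigenvalueP => v fv v0; exists x, (r2v v).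
  by apply: contraNneq v0 => r2v0; rewrite -(r2vK v) r2v0 linear0.
by rewrite unlock /= r2vK fv linearZ.
Qed.

End Eigenvalues.

(* Newton's iteration P |-> P (3 - P^2 (1 + X)) / 2 for (1 + X)^(-1/2). *)
Lemma poly_inv_sqrt_trunc (K : fieldType) n : (2%:R : K) != 0 ->
  exists P Q : {poly K}, P ^+ 2 * (1 + 'X) = 1 + 'X ^+ n.+1 * Q.
Proof.
move=> two_neq0; elim: n => [|n [P [Q PQ]]].
  by exists 1, 1; rewrite expr1n mul1r expr1 mulr1.
pose H : {poly K} := (2%:R^-1)%:P.
have H4 : H ^+ 2 * 4%:R = 1.
  by rewrite /H -polyC_exp -polyC_natr -polyCM; congr (_%:P); field.
pose A : {poly K} := 'X ^+ n.
exists (H * P * (3%:R - P ^+ 2 * (1 + 'X))),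
  (H ^+ 2 * A * Q ^+ 2 * (A * 'X * Q - 3%:R)).
have -> : (H * P * (3%:R - P ^+ 2 * (1 + 'X))) ^+ 2 * (1 + 'X) =
   H ^+ 2 * (P ^+ 2 * (1 + 'X)) * (3%:R - P ^+ 2 * (1 + 'X)) ^+ 2 by ring.
rewrite PQ !exprSr -/A expr0 mul1r.
transitivity (1 + (H ^+ 2 * 4%:R - 1) +
  A * 'X * 'X * (H ^+ 2 * A * Q ^+ 2 * (A * 'X * Q - 3%:R))); first by ring.
by rewrite H4 subrr addr0; ring.
Qed.

Section JordanProduct.
Variables (K : fieldType) (V : vectType K).
Hypothesis two_neq0 : (2%:R : K) != 0.
Implicit Types x y z : 'End(V).

Lemma jprodE x y v : jprod x y v = (2%:R^-1 : K) *: (x (y v) + y (x v)).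
Proof. by rewrite /jprod scale_lfunE add_lfunE !comp_lfunE. Qed.

Lemma half_double z : (2%:R^-1 : K) *: (z + z) = z.
Proof. by rewrite -mulr2n -scaler_nat scalerA mulVf // scale1r. Qed.

Lemma jprod_comp x y : (x \o y = y \o x)%VF -> jprod x y = (x \o y)%VF.
Proof. by move=> xy; rewrite /jprod -xy half_double. Qed.

Lemma jpow_lfun_exp x k : jpow x k = lfun_exp x k.
Proof. by elim: k => //= k ->; rewrite jprod_comp // lfun_exp_comm. Qed.

Lemma Uop_jprod x y :
  (x \o y \o x)%VF = 2%:R *: jprod x (jprod x y) - jprod (x \o x)%VF y.
Proof.
rewrite /jprod -!comp_lfunZr -!comp_lfunZl !comp_lfunDr !comp_lfunDl !comp_lfunA.
rewrite -scalerDr scalerA mulfV // scale1r -scalerBr.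
set a := (x \o x \o y)%VF; set b := (x \o y \o x)%VF; set c := (y \o x \o x)%VF.
have -> : a + b + (b + c) - (a + c) = b + b.
  by apply/eqP; rewrite subr_eq (addrACA b b) [b + a]addrC.
by rewrite half_double.
Qed.

Lemma jprod_polarization x y :
  jprod x y = (2%:R^-1 : K) *:
    (((x + y) \o (x + y))%VF - (x \o x)%VF - (y \o y)%VF).
Proof.
rewrite /jprod comp_lfunDl !comp_lfunDr; congr (_ *: _); apply: esym.
set a := (x \o x)%VF; set b := (x \o y)%VF; set c := (y \o x)%VF; set d := (y \o y)%VF.
by rewrite (addrC (a + b)) [a + b]addrC addrA addrK addrAC addrK addrC.
Qed.

Lemma jinvertible_lfun_inverse (J : 'End(V) -> Prop) (f psi : 'End(V)) : J psi ->
  (f \o psi = \1)%VF -> (psi \o f = \1)%VF -> jinvertible J f.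
Proof.
move=> Jpsi fpsi psif; exists psi => //.
have ffpsi : (f \o f \o psi = f)%VF by rewrite -comp_lfunA fpsi comp_lfun1r.
have psiff : (psi \o (f \o f) = f)%VF by rewrite comp_lfunA psif comp_lfun1l.
by rewrite !jprod_comp ?fpsi ?psif ?ffpsi ?psiff.
Qed.

Lemma jnilpotent_lfun_nilpotent (f : 'End(V)) : lfun_nilpotent f -> jnilpotent f.
Proof.
by move=> [k fk]; exists k.+1; rewrite jpow_lfun_exp // lfun_expS fk comp_lfun0r.
Qed.

End JordanProduct.

Section LeftComposition.
Variables (K : fieldType) (V : vectType K) (f : 'End(V)).

Definition lcomp (z : 'End(V)) : 'End(V) := (f \o z)%VF.

Fact lcomp_is_linear : linear lcomp.
Proof. by move=> a x y; rewrite /lcomp comp_lfunDr comp_lfunZr. Qed.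

HB.instance Definition _ := GRing.isSemilinear.Build K _ _ _ lcomp
  (GRing.semilinear_linear lcomp_is_linear).

Definition lcomp_lfun : 'End('End(V)) := linfun lcomp.

Lemma lcomp_lfunE z : lcomp_lfun z = (f \o z)%VF.
Proof. by rewrite lfunE. Qed.

End LeftComposition.

Section WordFiltration.
Variables (K : fieldType) (V : vectType K).
Implicit Types (F S : 'End(V) -> Prop) (a s u z : 'End(V)) (v w : V).

Fixpoint annihilated F n v : Prop :=
  if n is n'.+1 then forall a, F a -> annihilated F n' (a v) else v = 0.

Lemma annihilated0 F n : annihilated F n 0.
Proof. by elim: n => [|n IHn] //= a _; rewrite linear0. Qed.

Lemma annihilatedP F n c v w :
  annihilated F n v -> annihilated F n w -> annihilated F n (c *: v + w).
Proof.
elim: n v w => [|n IHn] v w /=; first by move=> -> ->; rewrite scaler0 addr0.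
by move=> Fv Fw a Fa; rewrite linearP; apply: IHn; [apply: Fv | apply: Fw].
Qed.

Lemma annihilatedZ F n c v : annihilated F n v -> annihilated F n (c *: v).
Proof. by move=> Fv; rewrite -[_ *: _]addr0; apply/annihilatedP/annihilated0. Qed.

Lemma annihilatedD F n v w :
  annihilated F n v -> annihilated F n w -> annihilated F n (v + w).
Proof. by move=> Fv Fw; rewrite -[v]scale1r; apply: annihilatedP. Qed.

Lemma annihilatedS F n v : annihilated F n v -> annihilated F n.+1 v.
Proof.
elim: n v => [|n IHn] v /=; first by move=> -> a _; rewrite linear0.
by move=> Fv a Fa; apply/IHn/Fv.
Qed.

Lemma annihilated_leq F m n v : (m <= n)%N -> annihilated F m v -> annihilated F n v.
Proof.
move/subnK <-; elim: (n - m)%N => [|d IHd] //= Fv.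
exact/annihilatedS/IHd.
Qed.

Definition lowers F z := forall n v, annihilated F n.+1 v -> annihilated F n (z v).

Definition word_nilpotent F := exists k, forall v, annihilated F k v.

Lemma lowers_mem F a : F a -> lowers F a.
Proof. by move=> Fa n v /(_ a Fa). Qed.

Lemma lowers0 F : lowers F 0.
Proof. by move=> n v _; rewrite zero_lfunE; apply: annihilated0. Qed.

Lemma lowersP F c x y : lowers F x -> lowers F y -> lowers F (c *: x + y).
Proof.
move=> xF yF n v Fv; rewrite add_lfunE scale_lfunE.
by apply: annihilatedP; [apply: xF | apply: yF].
Qed.

Lemma annihilated_lowering F S n v :
  (forall s, S s -> lowers F s) -> annihilated F n v -> annihilated S n v.
Proof.
move=> SF; elim: n v => [|n IHn] v //= Fv s Ss.
exact/IHn/SF.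
Qed.

Section DepthDrop.
Variables (S : 'End(V) -> Prop) (k : nat).
Hypothesis S_nil : forall v, annihilated S k v.

(* [n + k - m] is truncated, and level [0] of the filtration is {0}. *)
Definition drops_depth m z :=
  forall n v, annihilated S n v -> annihilated S (n + k - m) (z v).

Lemma drops_depth0 z : drops_depth 0 z.
Proof. by move=> n v _; rewrite subn0; apply/(annihilated_leq (leq_addl n k))/S_nil. Qed.

Lemma drops_depth_jprod m s z :
  S s -> drops_depth m z -> drops_depth m.+1 (jprod s z).
Proof.
move=> Ss zm n v Sv; rewrite jprodE; apply/annihilatedZ/annihilatedD.
  have := zm n v Sv; case def_d: (n + k - m)%N => [|d] /=.
    by move=> ->; rewrite linear0; apply: annihilated0.
  by move=> zv; rewrite (_ : (n + k - m.+1)%N = d); [apply: zv | lia].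
case: n Sv => [|n] /= Sv; first by rewrite Sv !linear0; apply: annihilated0.
by rewrite (_ : (n.+1 + k - m.+1 = n + k - m)%N); [apply: zm; apply: Sv | lia].
Qed.

Lemma drops_depth_eq0 z : drops_depth (k + k) z -> z = 0.
Proof.
move=> zk; apply/lfunP => v; rewrite zero_lfunE.
by have := zk k v (S_nil v); rewrite subnn.
Qed.

End DepthDrop.

(* Otherwise the products s_m * (... * (s_1 * x)) stay outside S while each
   one drops one more level of the S-filtration, until one of them is 0. *)
Lemma exists_jordan_normalizer (M S : 'End(V) -> Prop) k x :
  (forall y z, M y -> M z -> M (jprod y z)) -> (forall s, S s -> M s) -> S 0 ->
  (forall v, annihilated S k v) -> M x -> ~ S x ->
  exists u, [/\ M u, ~ S u & forall s, S s -> S (jprod s u)].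
Proof.
move=> M_jprod SM S0 S_nil Mx Sx; apply: NNPP => no_normalizer.
have step z : M z -> ~ S z -> exists2 s, S s & ~ S (jprod s z).
  move=> Mz Sz; apply: NNPP => z_normal; apply: no_normalizer; exists z; split=> // s Ss.
  by apply: NNPP => Ssz; apply: z_normal; exists s.
have chain m : exists z, [/\ M z, ~ S z & drops_depth S k m z].
  elim: m => [|m [z [Mz Sz zm]]]; first by exists x; split=> //; apply: drops_depth0.
  have [s Ss Ssz] := step z Mz Sz.
  by exists (jprod s z); split; [apply/M_jprod/Mz/SM | | apply: drops_depth_jprod].
have [z [_ Sz /(drops_depth_eq0 S_nil) z0]] := chain (k + k)%N.
by apply: Sz; rewrite z0.
Qed.

(* [u] preserves each level of the S-filtration, since s (u v) is
   2 (s * u) v - u (s v). *)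
Lemma word_nilpotent_adjoin S k u r : (2%:R : K) != 0 ->
  (forall v, annihilated S k v) -> lfun_exp u r = 0 ->
  (forall s, S s -> S (jprod s u)) -> word_nilpotent (fun a => S a \/ a = u).
Proof.
move=> two_neq0 S_nil ur Su.
have u_stable i v : annihilated S i v -> annihilated S i (u v).
  elim: i v => [|i IHi] v /=; first by move=> ->; rewrite linear0.
  move=> Sv s Ss.
  have -> : s (u v) = (2%:R : K) *: jprod s u v - u (s v).
    by rewrite jprodE scalerA mulfV // scale1r addrK.
  apply/annihilatedD; first exact/annihilatedZ/Sv/Su.
  by rewrite -scaleN1r; apply/annihilatedZ/IHi/Sv.
set F := fun a => S a \/ a = u.
have F_nil i v : annihilated S i v -> annihilated F (i * r) v.
  elim: i v => [|i IHi] v; first by rewrite mul0n.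
  have F_u j w : (j <= r)%N -> annihilated S i.+1 w ->
      annihilated S i (lfun_exp u j w) -> annihilated F (i * r + j) w.
    elim: j w => [|j IHj] w jr Sw Suw.
      by rewrite addn0; apply: IHi; rewrite lfun_exp0 id_lfunE in Suw.
    rewrite addnS => a [Sa | ->].
      by apply: (annihilated_leq (leq_addr j _)); apply/IHi/Sw.
    apply: IHj; [lia | exact: u_stable | by rewrite -comp_lfunE -lfun_expSr].
  move=> Sv; rewrite mulSnr; apply: F_u => //.
  by rewrite ur zero_lfunE; apply: annihilated0.
by exists (k * r)%N => v; apply: F_nil.
Qed.

Section LoweringFlag.
Variable M : {vspace 'End(V)}.
Hypothesis two_neq0 : (2%:R : K) != 0.
Hypothesis memM_jprod : forall x y, x \in M -> y \in M -> jprod x y \in M.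
Hypothesis M_nilpotent : forall x, x \in M -> lfun_nilpotent x.

Lemma lowering_vspace F : exists U : {vspace 'End(V)},
  forall z, z \in U <-> z \in M /\ lowers F z.
Proof.
apply: vspace_of_pred; first by split; [apply: mem0v | apply: lowers0].
move=> c x y [xM xF] [yM yF]; split; first exact/memvD/yM/memvZ.
exact: lowersP.
Qed.

(* Take F and a subspace U of the elements of M lowering the F-filtration, with
   \dim U maximal.  An element of M outside U yields a Jordan normalizer u of U
   outside U, and adjoining u to U gives a larger such subspace. *)
Theorem lowering_flag :
  exists2 F, word_nilpotent F & forall z, z \in M -> lowers F z.
Proof.
pose flag_dim (n : nat) := exists2 F, word_nilpotent F & exists U : {vspace 'End(V)},
  (forall z, z \in U <-> z \in M /\ lowers F z) /\ \dim U = n.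
have [n [F F_nil [U [defU dimU]]] nmax] :
    exists2 n, flag_dim n & forall m, flag_dim m -> (m <= n)%N.
  apply: (@ex_maxn_prop _ (\dim {:'End(V)})).
    have [U defU] := lowering_vspace (fun _ => False).
    by exists (\dim U), (fun _ => False); [exists 1%N => v a [] | exists U].
  by move=> m [F _ [U [_ <-]]]; apply/dimvS/subvf.
exists F => // z zM; apply: NNPP => zF.
set S := fun a => a \in M /\ lowers F a.
have [k Fk] := F_nil.
have S_nil v : annihilated S k v by apply: annihilated_lowering (Fk v) => s [].
have [u [uM Su Su_normal]] :
    exists u, [/\ u \in M, ~ S u & forall s, S s -> S (jprod s u)].
  apply: (exists_jordan_normalizer memM_jprod _ _ S_nil zM) => [s [] // | | [_ /zF] //].
  exact: conj (mem0v M) (@lowers0 F).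
have [r ur] := M_nilpotent uM.
have F'_nil := word_nilpotent_adjoin two_neq0 S_nil ur Su_normal.
have [U' defU'] := lowering_vspace (fun a => S a \/ a = u).
have : (\dim U' <= n)%N by apply: nmax; exists (fun a => S a \/ a = u) => //; exists U'.
have UuU' : (U + <[u]> <= U')%VS.
  apply/subvP => _ /memv_addP [x xU [_ /vlineP [c ->] ->]].
  have /defU Sx := xU; rewrite addrC; apply/defU'; split.
    exact/memvD/Sx.1/memvZ.
  by apply: lowersP; apply: lowers_mem; [right | left].
rewrite -dimU => /(leq_trans (dimvS UuU')); apply/negP; rewrite -ltnNge.
by apply: dimv_add_line_gt; apply: contra_notN Su => /defU.
Qed.

End LoweringFlag.

Lemma jmonomial_lowers (N : {vspace 'End(V)}) F m x :
  (forall z, z \in N -> lowers F z) -> jmonomial N m x ->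
  forall n v, annihilated F (n + m) v -> annihilated F n (x v).
Proof.
move=> NF; elim=> {m x} [x xN | i j x y _ IHx _ IHy] n v Fv.
  by apply: NF => //; rewrite -addn1.
rewrite jprodE; apply/annihilatedZ/annihilatedD.
  by apply/IHx/IHy; rewrite -addnA.
by apply/IHy/IHx; rewrite -addnA (addnC j i).
Qed.

Theorem nilpotent_jordan_algebra (N : {vspace 'End(V)}) : (2%:R : K) != 0 ->
  (forall x y, x \in N -> y \in N -> jprod x y \in N) ->
  (forall x, x \in N -> lfun_nilpotent x) -> jnilpotent_algebra N.
Proof.
move=> two_neq0 N_jprod N_nil; split=> //.
have [F [k Fk] NF] := lowering_flag two_neq0 N_jprod N_nil.
exists k => m x km /(jmonomial_lowers NF) xF; apply/lfunP => v; rewrite zero_lfunE.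
by apply: (xF 0%N); rewrite add0n; apply: annihilated_leq km (Fk v).
Qed.

End WordFiltration.

Section JordanSubalgebra.
Variables (K : fieldType) (V : vectType K) (J : {vspace 'End(V)}).
Hypothesis two_neq0 : (2%:R : K) != 0.
Hypothesis J1 : \1%VF \in J.
Hypothesis memJ_jprod : forall x y, x \in J -> y \in J -> jprod x y \in J.
Implicit Types (f w x y z : 'End(V)).

Lemma memJ_comp x y : x \in J -> y \in J -> (x \o y = y \o x)%VF -> (x \o y)%VF \in J.
Proof. by move=> xJ yJ xy; rewrite -jprod_comp //; apply: memJ_jprod. Qed.

Lemma memJ_sqr x : x \in J -> (x \o x)%VF \in J.
Proof. by move=> xJ; apply: memJ_comp. Qed.

Lemma memJ_exp f k : f \in J -> lfun_exp f k \in J.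
Proof.
move=> fJ; elim: k => [|k IHk] //.
by rewrite lfun_expS; apply: memJ_comp => //; rewrite lfun_exp_comm.
Qed.

Lemma memJ_Uop x y : x \in J -> y \in J -> (x \o y \o x)%VF \in J.
Proof.
move=> xJ yJ; rewrite Uop_jprod //.
by apply: memvB; [apply/memvZ/memJ_jprod/memJ_jprod | apply/memJ_jprod/yJ/memJ_sqr].
Qed.

Lemma centralizer_vspace f : exists C : {vspace 'End(V)},
  forall z, z \in C <-> z \in J /\ (z \o f = f \o z)%VF.
Proof.
apply: vspace_of_pred; first by rewrite mem0v comp_lfun0l comp_lfun0r.
move=> a x y [xJ xf] [yJ yf]; split; first by apply/memvD/yJ/memvZ.
by rewrite comp_lfunDl comp_lfunDr -comp_lfunZl -comp_lfunZr xf yf.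
Qed.

Lemma centralizer_lcomp f (C : {vspace 'End(V)}) : f \in J ->
  (forall z, z \in C <-> z \in J /\ (z \o f = f \o z)%VF) ->
  forall z, z \in C -> (f \o z)%VF \in C.
Proof.
move=> fJ defC z /defC [zJ zf]; apply/defC; split; first exact: memJ_comp.
by rewrite -comp_lfunA zf.
Qed.

Lemma memJ_injective_inverse f : f \in J -> injective f ->
  exists2 psi, psi \in J & (f \o psi = \1)%VF /\ (psi \o f = \1)%VF.
Proof.
move=> fJ /lker0P finj; have [C defC] := centralizer_vspace f.
have C_lcomp := centralizer_lcomp fJ defC.
have lcompC : (lcomp_lfun f @: C)%VS = C.
  apply/eqP; rewrite eqEdim; apply/andP; split.
    by apply/subvP => _ /memv_imgP [z zC ->]; rewrite lcomp_lfunE C_lcomp.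
  rewrite limg_dim_eq //; apply/eqP; rewrite -subv0; apply/subvP => z.
  rewrite memv_cap memv_ker lcomp_lfunE memv0 => /andP [_ /eqP fz0].
  apply/eqP/lfunP => v; apply: (lker0P finj).
  by rewrite -comp_lfunE fz0 !zero_lfunE linear0.
have : \1%VF \in (lcomp_lfun f @: C)%VS.
  by rewrite lcompC; apply/defC; rewrite comp_lfun1l comp_lfun1r.
case/memv_imgP => psi /defC [psiJ psif]; rewrite lcomp_lfunE => fpsi.
by exists psi; rewrite // psif -fpsi.
Qed.

(* The images f^k \o C of the centralizer C of f in J decrease, hence stall. *)
Lemma memJ_fitting f : f \in J ->
  exists k, exists2 w, w \in J /\ (w \o f = f \o w)%VF &
  lfun_exp f k.+1 = (lfun_exp f k.+1 \o lfun_exp f k.+1 \o w)%VF.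
Proof.
move=> fJ; have [C defC] := centralizer_vspace f.
pose Y k := (lcomp_lfun (lfun_exp f k) @: C)%VS.
have YS k : Y k.+1 = (lcomp_lfun f @: Y k)%VS.
  rewrite -limg_comp; congr (_ @: C)%VS; apply/lfunP => z.
  by rewrite comp_lfunE !lcomp_lfunE lfun_expS comp_lfunA.
have [k0 Yk0] : exists k, Y k.+1 = Y k.
  apply: vspace_chain_stalls => k; rewrite YS.
  elim: k => [|k IHk]; last by rewrite YS limgS.
  apply/subvP => _ /memv_imgP [_ /memv_imgP [z zC ->] ->].
  rewrite !lcomp_lfunE lfun_exp0 comp_lfun1l -[(f \o z)%VF]comp_lfun1l -lcomp_lfunE.
  exact/memv_img/(centralizer_lcomp fJ defC).
have Ystable j : Y (k0 + j)%N = Y k0.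
  by elim: j => [|j IHj]; rewrite ?addn0 // addnS YS IHj -YS.
have : lfun_exp f k0.+1 \in Y (k0.+1 + k0.+1)%N.
  rewrite addSnnS Ystable -Yk0 -[X in X \in _]comp_lfun1r -lcomp_lfunE.
  by apply/memv_img/defC; rewrite comp_lfun1l comp_lfun1r.
case/memv_imgP => w /defC wC; rewrite lcomp_lfunE lfun_expD => fk.
by exists k0, w.
Qed.

Lemma memJ_trichotomy f : f \in J ->
  [\/ exists2 psi, psi \in J & (f \o psi = \1)%VF /\ (psi \o f = \1)%VF,
      lfun_nilpotent f |
      exists2 e, e \in J & [/\ (e \o e = e)%VF, e != 0 & e != \1%VF]].
Proof.
move=> fJ; have [/lker0P finj | fninj] := boolP (lker f == 0%VS).
  by apply: Or31; apply: memJ_injective_inverse.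
have [k [w [wJ wf] fk]] := memJ_fitting fJ.
have wp := lfun_exp_comm wf k.+1.
have [e0 | e_neq0] := eqVneq (lfun_exp f k.+1 \o w)%VF 0.
  by apply: Or32; exists k.+1; rewrite fk -comp_lfunA e0 comp_lfun0r.
have [e1 | e_neq1] := eqVneq (lfun_exp f k.+1 \o w)%VF \1%VF.
  case/negP: fninj; apply/lker0P => t t' ftt'.
  have wf_inv u : u = (w \o lfun_exp f k \o f)%VF u.
    by rewrite -comp_lfunA -lfun_expSr wp e1 id_lfunE.
  by rewrite (wf_inv t) (wf_inv t') !comp_lfunE ftt'.
apply: Or33; exists (lfun_exp f k.+1 \o w)%VF.
  by apply: memJ_comp; rewrite ?memJ_exp.
by split=> //; apply: comp_idempotent.
Qed.

Section IdempotentFree.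
Hypothesis J_idempotent : forall e, e \in J -> (e \o e = e)%VF -> e = 0 \/ e = \1%VF.
Hypothesis closedK : GRing.closed_field_axiom K.

Section PositiveDimension.
Hypothesis dimV : (0 < dim V)%N.

Lemma memJ_nilpotentP f : f \in J -> lfun_nilpotent f <-> ~ injective f.
Proof.
move=> fJ; split; first exact: lfun_nilpotent_not_injective.
move=> fninj; case: (memJ_trichotomy fJ).
- case=> psi _ [_ psif]; case: fninj => t t' ftt'.
  by rewrite -[t]id_lfunE -[t']id_lfunE -psif !comp_lfunE ftt'.
- by [].
- by case=> e /J_idempotent idem [/idem [] ->]; rewrite eqxx.
Qed.

Lemma memJ_eigen_nilpotent f : f \in J -> exists c, lfun_nilpotent (f - c *: \1%VF).
Proof.
move=> fJ; have [c [v v0 fv]] := lfun_eigenvector f closedK dimV.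
exists c; apply/memJ_nilpotentP; first by apply/memvB/memvZ.
move=> /(_ v 0); rewrite linear0 !add_lfunE opp_lfunE scale_lfunE id_lfunE fv subrr.
by move=> /(_ erefl) /eqP; rewrite (negbTE v0).
Qed.

(* In this algebra the product is reversed composition: [x * y = y \o x]. *)
Local Notation A := (lfun_algType dimV).

Lemma lfun_alg_exp (x : A) k : x ^+ k = lfun_exp x k.
Proof. by elim: k => [|k IHk] //; rewrite exprSr IHk. Qed.

Lemma memJ_horner (m : A) p : m \in J -> horner_alg m p \in J.
Proof.
move=> mJ; elim/poly_ind: p => [|p c IHp]; first by rewrite rmorph0 mem0v.
rewrite rmorphD rmorphM /= horner_algX horner_algC.
apply/memvD; last exact/memvZ.
apply: memJ_comp => //.
by have := congr1 (horner_alg m) (mulrC p 'X); rewrite !rmorphM /= horner_algX.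
Qed.

(* [v] is [a P(m)] where [u = c (1 + m)], [a^2 c = 1] and [P] truncates
   (1 + X)^(-1/2) beyond the nilpotency index of [m]. *)
Lemma memJ_inv_sqrt u c : u \in J -> c != 0 -> lfun_nilpotent (u - c *: \1%VF) ->
  exists2 v, v \in J & (v \o u \o v = \1)%VF.
Proof.
move=> uJ c0 [k uk].
pose m : A := c^-1 *: (u - c *: \1%VF).
have mk : m ^+ k.+1 = 0.
  by rewrite lfun_alg_exp lfun_expZ lfun_expS uk comp_lfun0r scaler0.
have uE : u = horner_alg m (c *: (1 + 'X)).
  rewrite linearZ /= rmorphD rmorph1 /= horner_algX /m mulr_algl scalerDr scalerA.
  by rewrite mulfV // scale1r addrC subrK.
have [a a2c] : exists a : K, a ^+ 2 * c = 1.
  have [a a2] := closedK (fun i => if i == 0%N then c^-1 else 0) (isT : 0 < 2)%N.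
  exists a; rewrite a2 !big_ord_recr big_ord0 /= mul0r !add0r addr0 expr0 mulr1.
  by rewrite mulVf.
have [P [Q PQ]] := poly_inv_sqrt_trunc k two_neq0.
exists (horner_alg m (a *: P)); first by apply: memJ_horner; apply/memvZ/memvB/memvZ.
rewrite [in X in (_ \o X \o _)%VF]uE.
change (horner_alg m (a *: P) *
        (horner_alg m (c *: (1 + 'X)) * horner_alg m (a *: P)) = 1).
have vuv : (a *: P) * ((c *: (1 + 'X)) * (a *: P)) = 1 + 'X ^+ k.+1 * Q.
  by rewrite -!mul_polyC -PQ -[RHS]mul1r -polyC1 -a2c polyCM polyC_exp; ring.
rewrite -!rmorphM vuv rmorphD rmorph1 rmorphM rmorphXn /= horner_algX mk.
by rewrite mul0r addr0.
Qed.

Lemma memJ_nilpotentD x y : x \in J -> y \in J ->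
  lfun_nilpotent x -> lfun_nilpotent y -> lfun_nilpotent (x + y).
Proof.
move=> xJ yJ xn yn; have xyJ : x + y \in J by apply/memvD.
have [c xyc] := memJ_eigen_nilpotent xyJ.
have [c0 | c_neq0] := eqVneq c 0; first by rewrite c0 scale0r subr0 in xyc.
exfalso; have [v vJ vxyv] := memJ_inv_sqrt xyJ c_neq0 xyc.
have v_onto t : t = v ((x + y) (v t)).
  by rewrite -[LHS]id_lfunE -vxyv !comp_lfunE.
have Uop_nilpotent z : z \in J -> lfun_nilpotent z -> lfun_nilpotent (v \o z \o v)%VF.
  move=> zJ zn; apply/memJ_nilpotentP; first exact: memJ_Uop.
  move=> vzv_inj; apply: (lfun_nilpotent_not_injective dimV zn) => t t' ztt'.
  rewrite (v_onto t) (v_onto t'); congr (v _); apply: vzv_inj.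
  by rewrite !comp_lfunE -!v_onto ztt'.
have vyvE : (v \o y \o v)%VF = 1 *: \1%VF + - (v \o x \o v)%VF.
  by rewrite scale1r -vxyv comp_lfunDr comp_lfunDl addrC addKr.
apply: (lfun_nilpotent_not_injective dimV (Uop_nilpotent y yJ yn)).
rewrite vyvE; apply: scalar_add_nilpotent_injective (oner_neq0 K) _.
exact/lfun_nilpotentN/Uop_nilpotent.
Qed.

Lemma memJ_nilpotent_jprod x y : x \in J -> y \in J ->
  lfun_nilpotent x -> lfun_nilpotent y -> lfun_nilpotent (jprod x y).
Proof.
move=> xJ yJ xn yn; rewrite jprod_polarization //; apply: lfun_nilpotentZ.
have xyJ : x + y \in J by apply/memvD.
apply: memJ_nilpotentD; rewrite ?memvN ?memJ_sqr //.
- by apply/memvB; apply: memJ_sqr.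
- apply: memJ_nilpotentD; rewrite ?memvN ?memJ_sqr //.
  + by apply/lfun_nilpotent_sqr/memJ_nilpotentD.
  + exact/lfun_nilpotentN/lfun_nilpotent_sqr.
- exact/lfun_nilpotentN/lfun_nilpotent_sqr.
Qed.

End PositiveDimension.

Lemma memJ_scalar_plus_nilpotent : exists N : {vspace 'End(V)},
  [/\ (forall f, f \in N -> f \in J),
      (forall f, f \in J -> exists c (n : 'End(V)), n \in N /\ f = c *: \1%VF + n),
      (forall c : K, c *: \1%VF \in N -> c *: (\1%VF : 'End(V)) = 0) &
      jnilpotent_algebra N].
Proof.
have [dim0 | dimV] := posnP (dim V).
  have eq0 (f : 'End(V)) : f = 0 by apply: lfun_dim0_eq0.
  exists 0%VS; split=> [f | f _ | c _ | ]; rewrite ?[f]eq0 ?mem0v //.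
    by exists 0, 0; rewrite mem0v [RHS]eq0.
  apply: nilpotent_jordan_algebra => // [x y _ _ | x _].
    by rewrite [jprod _ _]eq0 mem0v.
  by rewrite [x]eq0; apply: lfun_nilpotent0.
have [N defN] : exists N : {vspace 'End(V)},
    forall f, f \in N <-> f \in J /\ lfun_nilpotent f.
  apply: vspace_of_pred; first by rewrite mem0v; split=> //; apply: lfun_nilpotent0.
  move=> c x y [xJ xn] [yJ yn]; split; first exact/memvD/yJ/memvZ.
  by apply: (memJ_nilpotentD dimV); rewrite ?memvZ //; apply: lfun_nilpotentZ.
exists N; split=> [f /defN [] // | f fJ | c /defN [_ [k ck]] | ].
- have [c fc] := memJ_eigen_nilpotent dimV fJ.
  exists c, (f - c *: \1%VF); split; last by rewrite addrC subrK.
  by apply/defN; split=> //; apply/memvB/memvZ.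
- move/eqP: ck; rewrite lfun_expZ lfun_exp1 scaler_eq0 (negbTE (lfun1_neq0 dimV)) orbF.
  by rewrite expf_eq0 => /andP [_ /eqP ->]; rewrite scale0r.
apply: nilpotent_jordan_algebra => // [x y /defN [xJ xn] /defN [yJ yn] | x /defN [] //].
by apply/defN; split; [apply: memJ_jprod | apply: (memJ_nilpotent_jprod dimV)].
Qed.

End IdempotentFree.

End JordanSubalgebra.

Section HomLieStructures.
Variables (K : fieldType) (V : vectType K) (br : V -> V -> V).
Hypothesis br_lie : is_lie_bracket br.

Lemma br0r x : br x 0 = 0.
Proof.
case: br_lie => _ brPr _ _; have := brPr 1 0 0 x.
by rewrite scaler0 addr0 scale1r -{1}[br x 0]addr0 => /addrI <-.
Qed.

Lemma brDr x y z : br x (y + z) = br x y + br x z.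
Proof. by case: br_lie => _ brPr _ _; rewrite -[y]scale1r brPr !scale1r. Qed.

Lemma brDl x y z : br (x + y) z = br x z + br y z.
Proof. by case: br_lie => brPl _ _ _; rewrite -[x]scale1r brPl !scale1r. Qed.

Lemma brZr a x y : br x (a *: y) = a *: br x y.
Proof. by case: br_lie => _ brPr _ _; rewrite -[a *: y]addr0 brPr br0r addr0. Qed.

Lemma br_anti x y : br x y = - br y x.
Proof.
case: br_lie => _ _ brxx _; apply/eqP; rewrite -addr_eq0.
by have := brxx (x + y); rewrite brDl !brDr !brxx add0r addr0 => ->.
Qed.

Lemma homlie_vspace :
  exists H : {vspace 'End(V)}, forall phi, phi \in H <-> homlie br phi.
Proof.
apply: vspace_of_pred => [x y z | a f g f_hl g_hl x y z].
  by rewrite !zero_lfunE !br0r !addr0.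
rewrite !add_lfunE !scale_lfunE !brDr !brZr (addrACA (a *: br (br x y) (f z))).
rewrite (addrACA (a *: br (br x y) (f z) + a *: br (br z x) (f y))).
by rewrite -!scalerDr f_hl g_hl scaler0 addr0.
Qed.

Lemma homlie1 : homlie br \1%VF.
Proof.
move=> x y z; rewrite !id_lfunE (br_anti (br x y)) (br_anti (br z x)) (br_anti (br y z)).
rewrite -!opprD; apply/eqP; rewrite oppr_eq0; apply/eqP.
by case: br_lie => _ _ _ jacobi; rewrite -(jacobi z x y) addrAC.
Qed.

Definition lie_split : Prop :=
  exists A B : {vspace V},
    [/\ directv (A + B)%VS, (A + B)%VS = fullv, A != 0%VS, B != 0%VS &
        (forall a a' b, a \in A -> a' \in A -> b \in B -> br (br a a') b = 0) /\
        (forall b b' a, b \in B -> b' \in B -> a \in A -> br (br b b') a = 0)].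

Lemma idempotent_homlie_split e : homlie br e -> (e \o e = e)%VF ->
  e != 0 -> e != \1%VF -> lie_split.
Proof.
move=> e_hl ee e0 e1.
have eA a : a \in limg e -> e a = a by case/memv_imgP => w _ ->; rewrite -comp_lfunE ee.
have eB b : b \in lker e -> e b = 0 by rewrite memv_ker => /eqP.
exists (limg e), (lker e); split.
- apply/directv_addP/eqP; rewrite -subv0; apply/subvP => w /memv_capP [wA wB].
  by rewrite memv0 -(eA w wA) (eB w wB).
- apply/vspaceP => w; rewrite memvf -[w](subrK (e w)) addrC.
  apply: memv_add; first by apply/memv_img/memvf.
  by rewrite memv_ker linearB /= -comp_lfunE ee subrr.
- apply: contraNneq e0 => eA0; apply/eqP/lfunP => w; rewrite zero_lfunE.
  by apply/eqP; rewrite -memv0 -eA0 memv_img ?memvf.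
- apply: contraNneq e1 => /eqP/lker0P e_inj; apply/eqP/lfunP => w.
  by apply: e_inj; rewrite -comp_lfunE ee id_lfunE.
split=> [a a' b aA a'A bB | b b' a bB b'B aA].
  have := e_hl a a' b; rewrite (eB b bB) (eA a aA) (eA a' a'A) br0r add0r.
  rewrite (br_anti (br b a)) (br_anti (br a' b)) -opprD => /eqP.
  rewrite oppr_eq0 => /eqP h.
  case: br_lie => _ _ _ jacobi; move: (jacobi a' b a).
  by rewrite addrAC h add0r br_anti => /eqP; rewrite oppr_eq0 => /eqP.
by have := e_hl b b' a; rewrite (eB b bB) (eB b' b'B) (eA a aA) !br0r !addr0.
Qed.

End HomLieStructures.

Theorem proposition2p3 (K : fieldType) (V : vectType K) (br : V -> V -> V) :
  perfect_field K ->
  2%N \notin [pchar K] ->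
  is_lie_bracket br ->
  (forall phi psi : 'End(V), homlie br phi -> homlie br psi ->
     homlie br (jprod phi psi)) ->
  let cond_ii :=
    exists A B : {vspace V},
      [/\ directv (A + B)%VS, (A + B)%VS = fullv, A != 0%VS, B != 0%VS &
          (forall a a' b, a \in A -> a' \in A -> b \in B -> br (br a a') b = 0) /\
          (forall b b' a, b \in B -> b' \in B -> a \in A -> br (br b b') a = 0)] in
  ((forall phi : 'End(V), homlie br phi ->
       jinvertible (homlie br) phi \/ jnilpotent phi)
   \/ cond_ii)
  /\
  (GRing.closed_field_axiom K ->
   (exists N : {vspace 'End(V)},
      [/\ (forall phi, phi \in N -> homlie br phi),
          (forall phi, homlie br phi ->
             exists (c : K) (n : 'End(V)), n \in N /\ phi = c *: \1%VF + n),
          (forall c : K, c *: \1%VF \in N -> c *: (\1%VF : 'End(V)) = 0) &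
          jnilpotent_algebra N])
   \/ cond_ii).
Proof.
move=> _ char2 br_lie homlie_jprod cond_ii.
have two_neq0 : (2%:R : K) != 0.
  by apply: contraNneq char2 => two0; rewrite inE /= two0 eqxx.
have [H defH] := homlie_vspace br_lie.
have H1 : \1%VF \in H by apply/defH/homlie1.
have memH_jprod x y : x \in H -> y \in H -> jprod x y \in H.
  by move=> /defH x_hl /defH y_hl; apply/defH/homlie_jprod.
have [split_br | no_split] := classic cond_ii; first by split; right.
have no_idempotent e : e \in H -> (e \o e = e)%VF -> e = 0 \/ e = \1%VF.
  move=> /defH e_hl ee; have [|e0] := eqVneq e 0; first by left.
  have [|e1] := eqVneq e \1%VF; first by right.
  by case: no_split; apply: idempotent_homlie_split e_hl ee e0 e1.
split=> [|closedK]; left.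
  move=> phi /defH phiH; case: (memJ_trichotomy two_neq0 H1 memH_jprod phiH).
  - case=> psi /defH psi_hl [phipsi psiphi]; left.
    exact: jinvertible_lfun_inverse psi_hl phipsi psiphi.
  - by right; apply: jnilpotent_lfun_nilpotent.
  - by case=> e /no_idempotent idem [/idem [] ->]; rewrite eqxx.
have [N [NH decomp N_scalar N_nil]] :=
  memJ_scalar_plus_nilpotent two_neq0 H1 memH_jprod no_idempotent closedK.
by exists N; split=> // phi; [move/NH/defH | move/defH/decomp].
Qed.
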